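(* For every integer $n\ge 2$ and every nonzero real $x$, $$O_{n}'(x)+\frac{n}{x}O_{n}(x)=\sum_{j=1}^{n-1}O_{j}(x)O_{n-j}(x),$$ where $O_n'$ denotes the derivative of $O_n$ with respect to $x$.
   Context: For a nonzero real number $x$, the Oresme polynomials $O_n(x)$, $n\ge 0$, are defined by $O_{0}(x)=0$, $O_{1}(x)=\frac{1}{x}$, and $O_{n+1}(x)=O_{n}(x)-\frac{1}{x^{2}}O_{n-1}(x)$ for all $n\ge 1$; each $O_n$ is thus a rational function of $x$ (a polynomial in $1/x$), differentiable on $x\neq 0$. *)

From Stdlib Require Import Reals.
Open Scope R_scope.

Fixpoint oresme (n : nat) (x : R) : R :=
  match n with
  | O => 0
  | S O => / x
  | S ((S m) as k) => oresme k x - / (x ^ 2) * oresme m x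
  end.

From Stdlib Require Import Reals Lia.
Open Scope R_scope.

(* Write [conv n x = sum_{j=0}^{n} O_j(x) O_{n-j}(x)] for the
   self-convolution of the Oresme sequence.  Since O_0 = 0 the two end terms
   vanish, so [conv n x] is exactly the sum of the theorem.  The claim is then
   that O_n is differentiable with derivative [conv n x - (n/x) O_n(x)].
   1. Unfolding the three-term recurrence inside the convolution shows that
      [conv] obeys the same recurrence as O_n, forced by the term (1/x) O_{n+1}.
   2. Differentiating O_{n+2} = O_{n+1} - x^{-2} O_n with the product rule and
      the derivative -2/x^3 of x^{-2}, a two-step induction on n proves the
      derivative formula, the step being an identity closed by [conv_rec].
   3. The main theorem follows by dropping the vanishing end terms of [conv]. *)

Lemma oresme_SS (m : nat) (x : R) :
  oresme (S (S m)) x = oresme (S m) x - / (x ^ 2) * oresme m x.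
Proof. reflexivity. Qed.

Definition conv (n : nat) (x : R) : R :=
  sum_f_R0 (fun j => oresme j x * oresme (n - j) x) n.

(* The convolution satisfies the Oresme recurrence up to the forcing term
   (1/x) O_{n+1}, which comes from the two boundary products O_{n+1} O_1. *)
Lemma conv_rec (n : nat) (x : R) :
  conv (S (S n)) x = conv (S n) x - / (x ^ 2) * conv n x + / x * oresme (S n) x.
Proof.
  unfold conv. rewrite !tech5, !Nat.sub_diag.
  replace (S (S n) - S n)%nat with 1%nat by lia.
  assert (inner : forall i, (i <= n)%nat ->
    oresme i x * oresme (S (S n) - i) x =
    oresme i x * oresme (S n - i) x - (oresme i x * oresme (n - i) x) * / (x ^ 2)).
  { intros i Hi.
    replace (S (S n) - i)%nat with (S (S (n - i))) by lia.
    replace (S n - i)%nat with (S (n - i)) by lia.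
    rewrite oresme_SS. ring. }
  rewrite (sum_eq _ _ _ inner), minus_sum, <- scal_sum.
  simpl (oresme 0 x). simpl (oresme 1 x). ring.
Qed.

Definition oresme_deriv (n : nat) (x : R) : R :=
  conv n x - INR n / x * oresme n x.

Lemma derivable_pt_lim_inv_id (x : R) :
  x <> 0 -> derivable_pt_lim (fun y => / y) x (- / x ^ 2).
Proof.
  intro hx.
  assert (H := derivable_pt_lim_div (fun _ => 1) id x 0 1
    (derivable_pt_lim_const 1 x) (derivable_pt_lim_id x) hx).
  replace (- / x ^ 2) with ((0 * id x - 1 * 1) / (id x)²)
    by (unfold id, Rsqr; field; exact hx).
  apply (derivable_pt_lim_ext _ _ _ _ (fun y => Rmult_1_l (/ y)) H).
Qed.

Lemma derivable_pt_lim_inv_sqr (x : R) :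
  x <> 0 -> derivable_pt_lim (fun y => / (y ^ 2)) x (- 2 / x ^ 3).
Proof.
  intro hx.
  assert (H := derivable_pt_lim_mult _ _ x _ _
    (derivable_pt_lim_inv_id x hx) (derivable_pt_lim_inv_id x hx)).
  replace (- 2 / x ^ 3) with (- / x ^ 2 * / x + / x * - / x ^ 2)
    by (field; exact hx).
  apply (derivable_pt_lim_ext (fun y => / y * / y)); [|exact H].
  intro y. simpl. rewrite Rmult_1_r, Rinv_mult. reflexivity.
Qed.

(* The derivative formula, proved for two consecutive indices at once so that
   the induction can use the two-term recurrence. *)
Lemma oresme_deriv_pair (x : R) (hx : x <> 0) (n : nat) :
  derivable_pt_lim (oresme n) x (oresme_deriv n x) /\
  derivable_pt_lim (oresme (S n)) x (oresme_deriv (S n) x).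
Proof.
  induction n as [|n [IH0 IH1]].
  - split.
    + replace (oresme_deriv 0 x) with 0
        by (unfold oresme_deriv, conv; simpl; field; exact hx).
      exact (derivable_pt_lim_const 0 x).
    + replace (oresme_deriv 1 x) with (- / x ^ 2)
        by (unfold oresme_deriv, conv; simpl; field; exact hx).
      exact (derivable_pt_lim_inv_id x hx).
  - split; [exact IH1|].
    assert (H := derivable_pt_lim_minus _ _ x _ _ IH1
      (derivable_pt_lim_mult _ _ x _ _ (derivable_pt_lim_inv_sqr x hx) IH0)).
    apply (derivable_pt_lim_ext _ _ _ _ (fun y => eq_sym (oresme_SS n y))) in H.
    replace (oresme_deriv (S (S n)) x) with
      (oresme_deriv (S n) x - (- 2 / x ^ 3 * oresme n x + / x ^ 2 * oresme_deriv n x));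
      [exact H|].
    unfold oresme_deriv. rewrite conv_rec, oresme_SS, !S_INR. field. exact hx.
Qed.

(* Since O_0 = 0, the convolution equals the sum over interior indices only. *)
Lemma conv_interior (m : nat) (x : R) :
  conv (S (S m)) x = sum_f_R0 (fun k => oresme (S k) x * oresme (S (S m) - S k) x) m.
Proof.
  unfold conv. rewrite tech5, decomp_sum by lia. simpl pred.
  rewrite Nat.sub_diag. simpl (oresme 0 x). ring.
Qed.

Theorem mainTheorem12 (n : nat) (x : R) (hn : (2 <= n)%nat) (hx : x <> 0) :
  exists l : R,
    derivable_pt_lim (oresme n) x l /\
    l + INR n / x * oresme n x =
      sum_f_R0 (fun k => oresme (S k) x * oresme (n - S k) x) (n - 2).
Proof.
  exists (oresme_deriv n x). split; [apply oresme_deriv_pair; exact hx|].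
  destruct n as [|[|m]]; [lia|lia|].
  replace (S (S m) - 2)%nat with m by lia.
  rewrite <- conv_interior. unfold oresme_deriv. ring.
Qed.
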